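(* The structure $(B_\infty,T,\cdot,\equiv,1,\sigma_1,\sigma_1^{-1})$ is a canonical model for the link axioms. That is: (i) it satisfies the link axioms; (ii) every element of $B_\infty$ is the interpretation of a closed term of the language (built from $1,\sigma,\bar\sigma$ using $\cdot$ and $T$); (iii) for every structure $(S,T_1,*,\equiv',1',\sigma_1',\bar\sigma_1')$ satisfying the link axioms there is a unique homomorphism of structures $f:B_\infty\to S$, i.e. a unique map with $f(1)=1'$, $f(\sigma_1)=\sigma_1'$, $f(\sigma_1^{-1})=\bar\sigma_1'$, $f(x\cdot y)=f(x)*f(y)$, $f(T(x))=T_1(f(x))$ for all $x,y$, and $x\equiv y\Rightarrow f(x)\equiv' f(y)$.
   Context: Consider a first-order language (with equality) with signature $(\cdot,T,\equiv,1,\sigma,\bar\sigma)$: $\cdot$ binary function, $T$ unary function, $\equiv$ binary predicate, constants $1,\sigma,\bar\sigma$. The link axioms are: $\forall x,y,z\ x\cdot(y\cdot z)=(x\cdot y)\cdot z$; $\forall x\ 1\cdot x=x$; $\forall x\ x\cdot 1=x$; $\sigma\cdot\bar\sigma=\bar\sigma\cdot\sigma=1$; $\forall x,y\ T(x\cdot y)=T(x)\cdot T(y)$; $T(1)=1$; $\sigma\cdot T(\sigma)\cdot\sigma=T(\sigma)\cdot\sigma\cdot T(\sigma)$; $\forall b\ \sigma\cdot T(T(b))=T(T(b))\cdot\sigma$; $\equiv$ is reflexive, symmetric and transitive; $\forall x,y,z\ (y\cdot z=1\to x\equiv y\cdot x\cdot z)$; $\forall x\ x\equiv\sigma\cdot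 T(x)$; $\forall x\ x\equiv\bar\sigma\cdot T(x)$. $B_\infty$ is the group generated by $\{\sigma_i\}_{i\in\mathbb{N}}$ with relations $\sigma_i\sigma_j=\sigma_j\sigma_i$ for $i\ge j+2$ and $\sigma_i\sigma_{i+1}\sigma_i=\sigma_{i+1}\sigma_i\sigma_{i+1}$; $T$ is the homomorphism of $B_\infty$ with $T(\sigma_i)=\sigma_{i+1}$; $\cdot$ is the group multiplication, $1$ the identity, and $\sigma,\bar\sigma$ are interpreted as $\sigma_1,\sigma_1^{-1}$; $\equiv$ on $B_\infty$ is the equivalence relation generated by $aba^{-1}\equiv b$, $b\equiv\sigma_1T(b)$, $b\equiv\sigma_1^{-1}T(b)$ for all $a,b\in B_\infty$. *)

From Stdlib Require Import List ClassicalEpsilon.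
Import ListNotations.
Set Implicit Arguments.

Definition link_axioms (S : Type) (mul : S -> S -> S) (T : S -> S)
  (eqv : S -> S -> Prop) (one sig sigb : S) : Prop :=
  (forall x y z, mul x (mul y z) = mul (mul x y) z) /\
  (forall x, mul one x = x) /\
  (forall x, mul x one = x) /\
  (mul sig sigb = one /\ mul sigb sig = one) /\
  (forall x y, T (mul x y) = mul (T x) (T y)) /\
  T one = one /\
  mul (mul sig (T sig)) sig = mul (mul (T sig) sig) (T sig) /\
  (forall b, mul sig (T (T b)) = mul (T (T b)) sig) /\
  (forall x, eqv x x) /\
  (forall x y, eqv x y -> eqv y x) /\
  (forall x y z, eqv x y -> eqv y z -> eqv x z) /\
  (forall x y z, mul y z = one -> eqv x (mul (mul y x) z)) /\
  (forall x, eqv x (mul sig (T x))) /\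
  (forall x, eqv x (mul sigb (T x))).

Inductive term : Type :=
| t_one | t_sig | t_sigb
| t_mul : term -> term -> term
| t_T : term -> term.

Fixpoint eval_term (S : Type) (mul : S -> S -> S) (T : S -> S)
  (one sig sigb : S) (t : term) : S :=
  match t with
  | t_one => one
  | t_sig => sig
  | t_sigb => sigb
  | t_mul a b => mul (eval_term mul T one sig sigb a) (eval_term mul T one sig sigb b)
  | t_T a => T (eval_term mul T one sig sigb a)
  end.

(* A letter (i, true) stands for sigma_{i+1}, (i, false) for sigma_{i+1}^{-1}:
   the generators are indexed by N = {1,2,...}, encoded with offset 1. *)
Definition letter := (nat * bool)%type.
Definition word := list letter.

Definition gen (i : nat) : word := [(i, true)].
Definition igen (i : nat) : word := [(i, false)].

Inductive brel : word -> word -> Prop :=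
| br_inv1 i : brel (gen i ++ igen i) []
| br_inv2 i : brel (igen i ++ gen i) []
| br_comm i j : j + 2 <= i -> brel (gen i ++ gen j) (gen j ++ gen i)
| br_braid i : brel (gen i ++ gen (S i) ++ gen i) (gen (S i) ++ gen i ++ gen (S i)).

Inductive weq : word -> word -> Prop :=
| weq_step u l r v : brel l r -> weq (u ++ l ++ v) (u ++ r ++ v)
| weq_refl w : weq w w
| weq_sym w1 w2 : weq w1 w2 -> weq w2 w1
| weq_trans w1 w2 w3 : weq w1 w2 -> weq w2 w3 -> weq w1 w3.

Definition Binf : Type := { P : word -> Prop | exists w, P = weq w }.

Definition cls (w : word) : Binf := exist _ (weq w) (ex_intro _ w eq_refl).

Definition repr (b : Binf) : word :=
  proj1_sig (constructive_indefinite_description _ (proj2_sig b)).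

Definition shift_letter (a : letter) : letter := (S (fst a), snd a).
Definition inv_letter (a : letter) : letter := (fst a, negb (snd a)).

Definition Bmul (a b : Binf) : Binf := cls (repr a ++ repr b).
Definition BT (a : Binf) : Binf := cls (map shift_letter (repr a)).
Definition Binv (a : Binf) : Binf := cls (rev (map inv_letter (repr a))).
Definition Bone : Binf := cls [].
Definition Bsig : Binf := cls (gen 0).
Definition Bsigb : Binf := cls (igen 0).

Inductive Beqv : Binf -> Binf -> Prop :=
| Beqv_conj a b : Beqv (Bmul (Bmul a b) (Binv a)) b
| Beqv_stab b : Beqv b (Bmul Bsig (BT b))
| Beqv_stabi b : Beqv b (Bmul Bsigb (BT b))
| Beqv_refl x : Beqv x x
| Beqv_sym x y : Beqv x y -> Beqv y x
| Beqv_trans x y z : Beqv x y -> Beqv y z -> Beqv x z.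

(* B_infinity is presented by the generators sigma_i and the braid relations,
   and sigma_(i+1) is the value of the closed term T^i(sigma); hence every
   braid is the value of a closed term.  In a model S of the link axioms,
   sending sigma_(i+1) to T^i(sigma') respects every defining relation: the
   inverse relations are T^i of sigma' sigmabar' = 1, the braid relations are
   T^i of the braid axiom, and far commutativity sigma_(j+1) sigma_(i+1) =
   sigma_(i+1) sigma_(j+1) for i >= j+2 is T^j of the axiom that sigma'
   commutes with T(T(b)).  This gives a homomorphism B_infinity -> S; it is
   unique because homomorphisms commute with the evaluation of closed terms. *)
From Stdlib Require Import List Arith Lia ClassicalEpsilon ProofIrrelevance
  FunctionalExtensionality PropExtensionality.
Import ListNotations.

Lemma weq_of_brel l r : brel l r -> weq l r.
Proof.
  intro H. pose proof (weq_step [] [] H) as Hlr.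
  simpl in Hlr. rewrite !app_nil_r in Hlr. exact Hlr.
Qed.

Lemma weq_app_r u v w : weq u v -> weq (u ++ w) (v ++ w).
Proof.
  induction 1 as [u' l r v' Hlr| | |]; eauto using weq.
  rewrite <- !app_assoc. now apply weq_step.
Qed.

Lemma weq_app_l u v w : weq u v -> weq (w ++ u) (w ++ v).
Proof.
  induction 1 as [u' l r v' Hlr| | |]; eauto using weq.
  rewrite !(app_assoc w u'). now apply weq_step.
Qed.

Lemma weq_app u u' v v' : weq u u' -> weq v v' -> weq (u ++ v) (u' ++ v').
Proof. eauto using weq, weq_app_l, weq_app_r. Qed.

Lemma brel_map_shift l r :
  brel l r -> brel (map shift_letter l) (map shift_letter r).
Proof.
  destruct 1; simpl.
  - exact (br_inv1 (S i)).
  - exact (br_inv2 (S i)).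
  - exact (br_comm (i := S i) (S j) ltac:(lia)).
  - exact (br_braid (S i)).
Qed.

Lemma weq_map_shift u v : weq u v -> weq (map shift_letter u) (map shift_letter v).
Proof.
  induction 1; eauto using weq.
  rewrite !map_app. apply weq_step, brel_map_shift. assumption.
Qed.

Lemma weq_inv_letter_r a : weq [a; inv_letter a] [].
Proof. destruct a as [i []]; apply weq_of_brel; constructor. Qed.

Lemma weq_inv_letter_l a : weq [inv_letter a; a] [].
Proof. destruct a as [i []]; apply weq_of_brel; constructor. Qed.

Lemma weq_inv_word_r w : weq (w ++ rev (map inv_letter w)) [].
Proof.
  induction w as [|a w IH]; simpl; [apply weq_refl|].
  replace (a :: w ++ rev (map inv_letter w) ++ [inv_letter a])
    with ([a] ++ (w ++ rev (map inv_letter w)) ++ [inv_letter a])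
    by (simpl; now rewrite app_assoc).
  eapply weq_trans; [apply weq_app_l, weq_app_r, IH|].
  apply weq_inv_letter_r.
Qed.

Lemma weq_inv_word_l w : weq (rev (map inv_letter w) ++ w) [].
Proof.
  induction w as [|a w IH]; simpl; [apply weq_refl|].
  replace ((rev (map inv_letter w) ++ [inv_letter a]) ++ a :: w)
    with (rev (map inv_letter w) ++ [inv_letter a; a] ++ w)
    by now rewrite <- app_assoc.
  eapply weq_trans; [apply weq_app_l, (weq_app_r _ [] w), weq_inv_letter_l|].
  exact IH.
Qed.

(* A negative letter is conjugated past sigma_1 through its inverse. *)
Lemma weq_gen0_letter_comm a : 2 <= fst a -> weq (gen 0 ++ [a]) ([a] ++ gen 0).
Proof.
  destruct a as [k []]; simpl; intro Hk.
  - apply weq_sym, weq_of_brel, br_comm. lia.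
  - eapply weq_trans.
    { apply weq_sym. exact (weq_step [] [(0, true); (k, false)] (br_inv2 k)). }
    eapply weq_trans.
    { exact (weq_step [(k, false)] [(k, false)] (br_comm (i := k) 0 ltac:(lia))). }
    exact (weq_step [(k, false); (0, true)] [] (br_inv1 k)).
Qed.

Lemma weq_gen0_shift2_comm w :
  weq (gen 0 ++ map shift_letter (map shift_letter w))
      (map shift_letter (map shift_letter w) ++ gen 0).
Proof.
  induction w as [|a w IH]; simpl; [apply weq_refl|].
  set (b := shift_letter (shift_letter a)).
  set (W := map shift_letter (map shift_letter w)) in *.
  change (weq ((gen 0 ++ [b]) ++ W) ([b] ++ (W ++ gen 0))).
  eapply weq_trans; [apply weq_app_r, weq_gen0_letter_comm; simpl; lia|].
  apply (weq_app_l _ _ [b]), IH.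
Qed.

Lemma cls_eq u v : weq u v -> cls u = cls v.
Proof.
  intro Huv. apply eq_sig_hprop; [intros; apply proof_irrelevance|]. simpl.
  apply functional_extensionality; intro w.
  apply propositional_extensionality; split; eauto using weq.
Qed.

Lemma cls_inj u v : cls u = cls v -> weq u v.
Proof.
  intro Huv. apply (f_equal (@proj1_sig _ _)) in Huv. simpl in Huv.
  apply weq_sym. rewrite <- Huv. apply weq_refl.
Qed.

Lemma cls_repr b : cls (repr b) = b.
Proof.
  destruct b as [P HP]. apply eq_sig_hprop; [intros; apply proof_irrelevance|].
  unfold repr; simpl.
  destruct (constructive_indefinite_description _ HP) as [w Hw]. auto.
Qed.

Lemma weq_repr_cls w : weq (repr (cls w)) w.
Proof. apply cls_inj, cls_repr. Qed.

Lemma cls_surj b : exists w, b = cls w.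
Proof. exists (repr b). symmetry; apply cls_repr. Qed.

Lemma Bmul_cls u v : Bmul (cls u) (cls v) = cls (u ++ v).
Proof. apply cls_eq, weq_app; apply weq_repr_cls. Qed.

Lemma BT_cls u : BT (cls u) = cls (map shift_letter u).
Proof. apply cls_eq, weq_map_shift, weq_repr_cls. Qed.

Lemma Bmul_invr a : Bmul a (Binv a) = Bone.
Proof.
  apply cls_eq. eapply weq_trans; [apply weq_app_l, weq_repr_cls|].
  apply weq_inv_word_r.
Qed.

Lemma Bmul_invl a : Bmul (Binv a) a = Bone.
Proof.
  apply cls_eq. eapply weq_trans; [apply weq_app_r, weq_repr_cls|].
  apply weq_inv_word_l.
Qed.

Lemma Bmul_assoc x y z : Bmul x (Bmul y z) = Bmul (Bmul x y) z.
Proof.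
  destruct (cls_surj x) as [u ->], (cls_surj y) as [v ->], (cls_surj z) as [w ->].
  now rewrite !Bmul_cls, app_assoc.
Qed.

Lemma Bmul_1l x : Bmul Bone x = x.
Proof. destruct (cls_surj x) as [u ->]. apply Bmul_cls. Qed.

Lemma Bmul_1r x : Bmul x Bone = x.
Proof. destruct (cls_surj x) as [u ->]. unfold Bone. now rewrite Bmul_cls, app_nil_r. Qed.

Lemma BT_mul x y : BT (Bmul x y) = Bmul (BT x) (BT y).
Proof.
  destruct (cls_surj x) as [u ->], (cls_surj y) as [v ->].
  now rewrite Bmul_cls, !BT_cls, Bmul_cls, map_app.
Qed.

Lemma right_inverse_eq y z : Bmul y z = Bone -> z = Binv y.
Proof. intro Hyz. now rewrite <- (Bmul_1l z), <- (Bmul_invl y), <- Bmul_assoc, Hyz, Bmul_1r. Qed.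

Lemma Binf_link_axioms : link_axioms Bmul BT Beqv Bone Bsig Bsigb.
Proof.
  repeat split.
  - apply Bmul_assoc.
  - apply Bmul_1l.
  - apply Bmul_1r.
  - unfold Bsig, Bsigb. rewrite Bmul_cls. apply cls_eq, weq_of_brel, br_inv1.
  - unfold Bsig, Bsigb. rewrite Bmul_cls. apply cls_eq, weq_of_brel, br_inv2.
  - apply BT_mul.
  - apply BT_cls.
  - unfold Bsig. rewrite !BT_cls, !Bmul_cls. apply cls_eq, weq_of_brel, br_braid.
  - intro b. destruct (cls_surj b) as [u ->]. unfold Bsig.
    rewrite !BT_cls, !Bmul_cls. apply cls_eq, weq_gen0_shift2_comm.
  - apply Beqv_refl.
  - apply Beqv_sym.
  - apply Beqv_trans.
  - intros x y z Hyz. rewrite (right_inverse_eq _ _ Hyz). apply Beqv_sym, Beqv_conj.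
  - apply Beqv_stab.
  - apply Beqv_stabi.
Qed.

Definition letter_term (a : letter) : term :=
  Nat.iter (fst a) t_T (if snd a then t_sig else t_sigb).

Fixpoint word_term (w : word) : term :=
  match w with
  | [] => t_one
  | a :: w => t_mul (letter_term a) (word_term w)
  end.

Lemma eval_term_hom (A B : Type) (mulA : A -> A -> A) (TA : A -> A)
  (oneA sigA sigbA : A) (mulB : B -> B -> B) (TB : B -> B) (oneB sigB sigbB : B)
  (f : A -> B) :
  f oneA = oneB -> f sigA = sigB -> f sigbA = sigbB ->
  (forall x y, f (mulA x y) = mulB (f x) (f y)) ->
  (forall x, f (TA x) = TB (f x)) ->
  forall t, f (eval_term mulA TA oneA sigA sigbA t) = eval_term mulB TB oneB sigB sigbB t.
Proof. intros Hone Hsig Hsigb Hmul HT. induction t; simpl; congruence. Qed.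

Lemma eval_iter_T (A : Type) (mul : A -> A -> A) (T : A -> A) (one sig sigb : A)
  n t : eval_term mul T one sig sigb (Nat.iter n t_T t) =
        Nat.iter n T (eval_term mul T one sig sigb t).
Proof. apply Nat.iter_swap_gen. reflexivity. Qed.

Lemma eval_letter_term_Binf a :
  eval_term Bmul BT Bone Bsig Bsigb (letter_term a) = cls [a].
Proof.
  destruct a as [i b]. unfold letter_term. rewrite eval_iter_T. simpl.
  induction i as [|i IH]; [destruct b; reflexivity|].
  simpl. rewrite IH, BT_cls. reflexivity.
Qed.

Lemma eval_word_term_Binf w : eval_term Bmul BT Bone Bsig Bsigb (word_term w) = cls w.
Proof.
  induction w as [|a w IH]; [reflexivity|]. simpl.
  rewrite IH, eval_letter_term_Binf, Bmul_cls. reflexivity.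
Qed.

Lemma Binf_term_definable x : exists t, eval_term Bmul BT Bone Bsig Bsigb t = x.
Proof.
  destruct (cls_surj x) as [w ->]. exists (word_term w). apply eval_word_term_Binf.
Qed.

Section WordValue.
Variables (M : Type) (mul : M -> M -> M) (T : M -> M) (eqv : M -> M -> Prop)
  (one sig sigb : M).
Hypotheses (mulA : forall x y z, mul x (mul y z) = mul (mul x y) z)
  (mul1 : forall x, mul one x = x) (mulx1 : forall x, mul x one = x)
  (sig_sigb : mul sig sigb = one) (sigb_sig : mul sigb sig = one)
  (T_mul : forall x y, T (mul x y) = mul (T x) (T y)) (T_one : T one = one)
  (T_braid : mul (mul sig (T sig)) sig = mul (mul (T sig) sig) (T sig))
  (sig_TT_comm : forall b, mul sig (T (T b)) = mul (T (T b)) sig).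
Hypotheses (eqv_refl : forall x, eqv x x) (eqv_sym : forall x y, eqv x y -> eqv y x)
  (eqv_trans : forall x y z, eqv x y -> eqv y z -> eqv x z)
  (eqv_conj : forall x y z, mul y z = one -> eqv x (mul (mul y x) z))
  (eqv_stab : forall x, eqv x (mul sig (T x)))
  (eqv_stabi : forall x, eqv x (mul sigb (T x))).

Definition word_value (w : word) : M := eval_term mul T one sig sigb (word_term w).

Lemma word_value_app u v : word_value (u ++ v) = mul (word_value u) (word_value v).
Proof.
  unfold word_value. induction u as [|a u IH]; simpl; [now rewrite mul1|].
  now rewrite IH, mulA.
Qed.

Lemma iterT_mul n x y : Nat.iter n T (mul x y) = mul (Nat.iter n T x) (Nat.iter n T y).
Proof. induction n as [|n IH]; simpl; [reflexivity|]. now rewrite IH, T_mul. Qed.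

Lemma iterT_one n : Nat.iter n T one = one.
Proof. induction n as [|n IH]; simpl; [reflexivity|]. now rewrite IH. Qed.

Lemma word_value_cons i b w :
  word_value ((i, b) :: w) = mul (Nat.iter i T (if b then sig else sigb)) (word_value w).
Proof.
  unfold word_value, word_term, letter_term; cbn [eval_term fst snd].
  rewrite eval_iter_T. now destruct b.
Qed.

Lemma word_value_brel l r : brel l r -> word_value l = word_value r.
Proof.
  destruct 1 as [i|i|i j Hji|i]; unfold gen, igen; simpl;
    rewrite !word_value_cons; change (word_value []) with one; rewrite !mulx1.
  - now rewrite <- iterT_mul, sig_sigb, iterT_one.
  - now rewrite <- iterT_mul, sigb_sig, iterT_one.
  - replace i with (j + S (S (i - j - 2))) by lia.
    rewrite Nat.iter_add, <- !iterT_mul. f_equal. symmetry. apply sig_TT_comm.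
  - now rewrite Nat.iter_succ_r, !mulA, <- !iterT_mul, T_braid.
Qed.

Lemma word_value_weq u v : weq u v -> word_value u = word_value v.
Proof.
  induction 1 as [u l r v Hlr| | |]; try congruence.
  rewrite !word_value_app, (word_value_brel _ _ Hlr). reflexivity.
Qed.

Lemma word_value_map_shift w : word_value (map shift_letter w) = T (word_value w).
Proof.
  induction w as [|[i b] w IH]; [symmetry; apply T_one|].
  change (word_value ((Datatypes.S i, b) :: map shift_letter w) = T (word_value ((i, b) :: w))).
  rewrite !word_value_cons, IH, T_mul. reflexivity.
Qed.

Definition braid_value (x : Binf) : M := word_value (repr x).

Lemma braid_value_cls w : braid_value (cls w) = word_value w.
Proof. apply word_value_weq, weq_repr_cls. Qed.

Lemma braid_value_mul x y : braid_value (Bmul x y) = mul (braid_value x) (braid_value y).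
Proof.
  destruct (cls_surj x) as [u ->], (cls_surj y) as [v ->].
  rewrite Bmul_cls, !braid_value_cls. apply word_value_app.
Qed.

Lemma braid_value_T x : braid_value (BT x) = T (braid_value x).
Proof.
  destruct (cls_surj x) as [u ->].
  rewrite BT_cls, !braid_value_cls. apply word_value_map_shift.
Qed.

Lemma braid_value_one : braid_value Bone = one.
Proof. apply braid_value_cls. Qed.

Lemma braid_value_sig : braid_value Bsig = sig.
Proof. unfold Bsig, gen. rewrite braid_value_cls, word_value_cons. apply mulx1. Qed.

Lemma braid_value_sigb : braid_value Bsigb = sigb.
Proof. unfold Bsigb, igen. rewrite braid_value_cls, word_value_cons. apply mulx1. Qed.

Lemma braid_value_eqv x y : Beqv x y -> eqv (braid_value x) (braid_value y).
Proof.
  induction 1 as [a b|b|b| | |]; eauto.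
  - rewrite !braid_value_mul. apply eqv_sym, eqv_conj.
    now rewrite <- braid_value_mul, Bmul_invr, braid_value_one.
  - rewrite braid_value_mul, braid_value_T, braid_value_sig. apply eqv_stab.
  - rewrite braid_value_mul, braid_value_T, braid_value_sigb. apply eqv_stabi.
Qed.

Lemma braid_value_hom :
  braid_value Bone = one /\ braid_value Bsig = sig /\ braid_value Bsigb = sigb /\
  (forall x y, braid_value (Bmul x y) = mul (braid_value x) (braid_value y)) /\
  (forall x, braid_value (BT x) = T (braid_value x)) /\
  (forall x y, Beqv x y -> eqv (braid_value x) (braid_value y)).
Proof.
  auto 7 using braid_value_one, braid_value_sig, braid_value_sigb, braid_value_mul,
    braid_value_T, braid_value_eqv.
Qed.

End WordValue.

Theorem theorem6p4 :
  link_axioms Bmul BT Beqv Bone Bsig Bsigb /\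
  (forall x : Binf, exists t : term, eval_term Bmul BT Bone Bsig Bsigb t = x) /\
  (forall (S : Type) (mul : S -> S -> S) (T1 : S -> S) (eqv : S -> S -> Prop)
     (one sig sigb : S),
     link_axioms mul T1 eqv one sig sigb ->
     exists! f : Binf -> S,
       f Bone = one /\ f Bsig = sig /\ f Bsigb = sigb /\
       (forall x y, f (Bmul x y) = mul (f x) (f y)) /\
       (forall x, f (BT x) = T1 (f x)) /\
       (forall x y, Beqv x y -> eqv (f x) (f y))).
Proof.
  split; [exact Binf_link_axioms|split; [exact Binf_term_definable|]].
  intros S mul T1 eqv one sig sigb HL.
  destruct HL as (mulA & mul1 & mulx1 & [sig_sigb sigb_sig] & T_mul & T_one &
    T_braid & sig_TT_comm & eqv_refl & eqv_sym & eqv_trans & eqv_conj & eqv_stab & eqv_stabi).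
  pose proof (braid_value_hom _ mul T1 eqv one sig sigb mulA mul1 mulx1 sig_sigb sigb_sig
    T_mul T_one T_braid sig_TT_comm eqv_refl eqv_sym eqv_trans eqv_conj eqv_stab eqv_stabi)
    as Hf.
  exists (braid_value _ mul T1 one sig sigb). split; [exact Hf|].
  destruct Hf as (f_one & f_sig & f_sigb & f_mul & f_T & _).
  intros h (h_one & h_sig & h_sigb & h_mul & h_T & _).
  apply functional_extensionality; intro x.
  destruct (Binf_term_definable x) as [t <-].
  rewrite (eval_term_hom _ _ _ _ _ _ _ _ _ _ _ _ _ f_one f_sig f_sigb f_mul f_T).
  symmetry. exact (eval_term_hom _ _ _ _ _ _ _ _ _ _ _ _ _ h_one h_sig h_sigb h_mul h_T t).
Qed.
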